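(* Let $X$ be a finite topological space and $x,y\in X$. Then $\Psi(x,y)=0$ if and only if $\Psi(x,a)\le \Psi(y,a)$ for every $a\in X$ (i.e. every entry in the row of $x$ of the furtherness matrix is at most the corresponding entry in the row of $y$).
   Context: For a finite topological space $X$ and $x\in X$, $U_x$ denotes the minimal open set containing $x$. A nested sequence of open sets around $x$ is a finite sequence $U_0\subsetneq U_1\subsetneq\cdots\subsetneq U_m=X$ of open sets with $U_0=U_x$ such that for each $j$ there is no open set $V$ with $U_j\subsetneq V\subsetneq U_{j+1}$. The furtherness function $\Psi:X\times X\to\{0,1,\dots,|X|-1\}$ is defined by: $\Psi(x,y)$ is the smallest integer $k\ge 0$ such that there exists a nested sequence $(U_j)_{j\ge0}$ of open sets around $x$ with $y\in U_k$. For $X=\{a_1,\dots,a_n\}$, the furtherness matrix $\Psi(X)$ is the $n\times n$ matrix with $(i,j)$ entry $\Psi(a_i,a_j)$. *)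

From mathcomp Require Import all_boot.
From mathcomp Require Import boolp.
Set Implicit Arguments. Unset Strict Implicit. Unset Printing Implicit Defensive.

(* A finite topological space: a finite carrier T with a family of open sets
   containing the empty set and the whole space, closed under (binary, hence
   all finite, hence all) unions and intersections. *)
Record fintop (T : finType) := FinTop {
  opens : {set {set T}};
  _ : set0 \in opens;
  _ : setT \in opens;
  _ : forall A B, A \in opens -> B \in opens -> A :|: B \in opens;
  _ : forall A B, A \in opens -> B \in opens -> A :&: B \in opens
}.

Section Furtherness.
Variables (T : finType) (t : fintop T).

Definition minopen (x : T) : {set T} :=
  \bigcap_(A in opens t | x \in A) A.

Definition opcover (A B : {set T}) : bool :=
  (A \proper B) && [forall V in opens t, ~~ ((A \proper V) && (V \proper B))].

Definition nested_seq (x : T) (s : seq {set T}) : Prop :=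
  exists rest, [/\ s = minopen x :: rest,
                   all (fun A => A \in opens t) s,
                   path opcover (minopen x) rest &
                   last (minopen x) rest = setT].

Definition further_at (x y : T) (k : nat) : Prop :=
  exists s, nested_seq x s /\ y \in nth set0 s k.

(* Psi(x, y) : the smallest such k (0 if no such k, which never happens) *)
Definition Psi (x y : T) : nat :=
  match pselect (exists k, further_at x y k) with
  | left ex => @ex_minn (fun k => `[< further_at x y k >])
                 (let: ex_intro k h := ex in ex_intro _ k (asboolT h))
  | right _ => 0
  end.

End Furtherness.

From mathcomp Require Import all_boot.
From mathcomp Require Import boolp.

Set Implicit Arguments.
Unset Strict Implicit.
Unset Printing Implicit Defensive.

(* Psi(x, y) = 0 means y \in U_x, i.e. U_y \subset U_x.  In that case every
   nested sequence around y can be pushed to one around x by taking unions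
   with U_x: the union with a fixed open set turns each covering step of the
   chain either into an equality (dropped) or into a covering step again, so
   the k-th open set around y lands inside some k'-th open set around x with
   k' <= k.  Conversely Psi(x, y) <= Psi(y, y) = 0. *)

Section Furtherness.
Variables (T : finType) (t : fintop T).

Lemma openT : setT \in opens t. Proof. by case: t. Qed.

Lemma openI A B : A \in opens t -> B \in opens t -> A :&: B \in opens t.
Proof. by case: t A B. Qed.

Lemma openU A B : A \in opens t -> B \in opens t -> A :|: B \in opens t.
Proof. by case: t A B. Qed.

Lemma minopen_open x : minopen t x \in opens t.
Proof.
apply: (big_ind (fun A => A \in opens t)); [exact: openT | exact: openI |].
by move=> A /andP[].
Qed.

Lemma mem_minopen x : x \in minopen t x.
Proof. by apply/bigcapP => A /andP[]. Qed.

Lemma minopen_min x A : A \in opens t -> x \in A -> minopen t x \subset A.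
Proof. by move=> oA xA; apply: bigcap_inf; rewrite oA. Qed.

Definition cover_chain (A : {set T}) (s : seq {set T}) : Prop :=
  [/\ path (opcover t) A s, all (fun B => B \in opens t) s & last A s = setT].

Lemma further_atP x y k :
  further_at t x y k <->
  exists2 s, cover_chain (minopen t x) s & y \in nth set0 (minopen t x :: s) k.
Proof.
split=> [[_ [[s [-> /andP[_ os] ps ls]] yk]] | [s chain yk]].
  by exists s; first split.
case: chain => ps os ls; exists (minopen t x :: s); split=> //.
by exists s; rewrite /= minopen_open.
Qed.

(* An open proper superset of A of minimal cardinality covers A. *)
Lemma cover_chain_exists A : A \in opens t -> exists s, cover_chain A s.
Proof.
move: {2}#|~: A| (leqnn #|~: A|) => n; elim: n A => [|n IHn] A szA oA.
  exists [::]; split=> //=.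
  by move: szA; rewrite leqn0 cards_eq0 => /eqP/(congr1 (@setC _)); rewrite setCK setC0.
have [->|AnT] := eqVneq A setT; first by exists [::].
pose P := [pred B | (B \in opens t) && (A \proper B)].
have PT : P setT by rewrite /= openT properT AnT.
case: (arg_minnP (fun B : {set T} => #|B|) PT) => B /andP[oB pAB] Bmin.
have covAB : opcover t A B.
  rewrite /opcover pAB; apply/forall_inP => V oV; apply/negP => /andP[pAV pVB].
  by have := Bmin V; rewrite inE oV pAV leqNgt proper_card // => /(_ isT).
have [|s [ps os ls]] := IHn B _ oB.
  by rewrite -ltnS (leq_trans _ szA) // proper_card // properC.
by exists (B :: s); split; rewrite /= ?covAB ?oB.
Qed.

Lemma opcover_setU U B C : U \in opens t -> C \in opens t -> opcover t B C ->
  U :|: B != U :|: C -> opcover t (U :|: B) (U :|: C).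
Proof.
move=> oU oC /andP[pBC /forall_inP covBC] neqBC.
rewrite /opcover properEneq neqBC setUS ?proper_sub //=.
apply/forall_inP => V oV; apply/negP => /andP[pBV pVC].
have sB_VC : B \subset V :&: C.
  by rewrite subsetI (proper_sub pBC) (subset_trans (subsetUr U B) (proper_sub pBV)).
move: (covBC (V :&: C) (openI oV oC)); rewrite !properE sB_VC subsetIr /= negb_and.
rewrite !negbK => /orP[sVC_B | sC_VC].
- move: pBV; rewrite properE => /andP[_ /negP]; apply; apply/subsetP => z zV.
  have := subsetP (proper_sub pVC) z zV; rewrite !inE => /orP[-> // | zC].
  by rewrite (subsetP sVC_B) ?orbT // inE zV.
- move: pVC; rewrite properE => /andP[_ /negP]; apply.
  rewrite subUset (subset_trans (subsetUl U B) (proper_sub pBV)).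
  exact: subset_trans sC_VC (subsetIl V C).
Qed.

Lemma cover_chain_setU U B s : U \in opens t -> B \in opens t ->
  cover_chain B s ->
  exists2 s', cover_chain (U :|: B) s' &
    forall k, exists2 k', k' <= k &
      nth set0 (B :: s) k \subset nth set0 (U :|: B :: s') k'.
Proof.
move=> oU; elim: s B => [|C s IHs] B oB [/= psB osB lsB].
  exists [::]; first by split=> //=; rewrite lsB setUT.
  by case=> [|k]; exists 0; rewrite //= ?subsetUr ?nth_nil ?sub0set.
move: psB osB => /andP[covBC psC] /andP[oC osC].
have [s' chain' nth_s'] := IHs C oC (And3 psC osC lsB).
have [eqBC | neqBC] := eqVneq (U :|: B) (U :|: C).
  exists s'; first by rewrite eqBC.
  case=> [|k]; first by exists 0; rewrite //= subsetUr.
  by have [k' k'k sk] := nth_s' k; exists k'; rewrite ?eqBC // ltnW.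
exists (U :|: C :: s').
  case: chain' => ps' os' ls'; split; rewrite /= ?openU //.
  by rewrite opcover_setU.
case=> [|k]; first by exists 0; rewrite //= subsetUr.
by have [k' k'k sk] := nth_s' k; exists k'.+1.
Qed.

Lemma further_Psi x y : further_at t x y (Psi t x y).
Proof.
rewrite /Psi; case: pselect => [ex | nex]; first by case: ex_minnP => m /asboolP.
exfalso; apply: nex; have [s chain] := cover_chain_exists (minopen_open x).
exists (size s); apply/further_atP; exists s => //.
by case: chain => _ _ ls; rewrite nth_last /= ls inE.
Qed.

Lemma Psi_min x y k : further_at t x y k -> Psi t x y <= k.
Proof.
rewrite /Psi; case: pselect => [ex | nex] fk; last by exfalso; apply: nex; exists k.
by case: ex_minnP => m _; apply; apply/asboolP.
Qed.

Lemma Psi_eq0 x y : (Psi t x y = 0) <-> (y \in minopen t x).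
Proof.
split=> [Psi0 | yUx].
  by have /further_atP[s _] := further_Psi x y; rewrite Psi0.
apply/eqP; rewrite -leqn0; apply: Psi_min; apply/further_atP.
by have [s chain] := cover_chain_exists (minopen_open x); exists s.
Qed.

Lemma Psi_minopen_mono x y a :
  minopen t y \subset minopen t x -> Psi t x a <= Psi t y a.
Proof.
move=> sUyx; have /further_atP[s chain ak] := further_Psi y a.
have [s' chain' nth_s'] := cover_chain_setU (minopen_open x) (minopen_open y) chain.
rewrite (setUidPl sUyx) in chain' nth_s'.
have [k' k'k sk] := nth_s' (Psi t y a).
apply: leq_trans k'k; apply: Psi_min; apply/further_atP.
by exists s'; last exact: subsetP sk _ ak.
Qed.

End Furtherness.

Theorem mainTheorem13 (T : finType) (t : fintop T) (x y : T) :
  Psi t x y = 0 <-> (forall a : T, Psi t x a <= Psi t y a).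
Proof.
split=> [/Psi_eq0 yUx a | Psi_le].
  by apply: Psi_minopen_mono; apply: minopen_min (minopen_open t x) yUx.
have Psi_yy : Psi t y y = 0 by apply/Psi_eq0; exact: mem_minopen.
by apply/eqP; rewrite -leqn0 -Psi_yy.
Qed.
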